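(* Let $m\ge 38$ be even and let $G$ be a graph with maximum spectral radius among all $H(4,3)$-free graphs with $m$ edges and no isolated vertices. Let $\mathbf{x}$ be the Perron vector of $G$, $u^*$ a vertex maximizing $x_{u^*}$, $N = N(u^* )$, and $A_+ = \{v\in N : d_N(v)\ge 1\}$. Then $G[A_+]$ is isomorphic to a star $K_{1,t}$ for some $t\ge 1$.
   Context: All graphs are simple and undirected; $\rho(G)$ is the largest adjacency eigenvalue and the Perron vector is the positive unit eigenvector for $\rho(G)$ (the extremal $G$ is connected). $H(4,3)$ is the graph formed by a cycle of length $4$ and a triangle sharing exactly one common vertex. $N(v)$ denotes the neighbourhood of $v$, $d_S(v)=|N(v)\cap S|$, and $G[S]$ is the subgraph induced by $S$. *)

From HB Require Import structures.
From mathcomp Require Import all_boot all_order all_algebra.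
From mathcomp Require Import reals.
Set Implicit Arguments. Unset Strict Implicit. Unset Printing Implicit Defensive.
Import Order.TTheory GRing.Theory Num.Theory.
Local Open Scope ring_scope.

Definition simple_graph (n : nat) (e : rel 'I_n) : Prop :=
  symmetric e /\ irreflexive e.

Definition num_edges (n : nat) (e : rel 'I_n) : nat :=
  #|[set p : 'I_n * 'I_n | e p.1 p.2 && (p.1 < p.2)%N]|.

Definition no_isolated (n : nat) (e : rel 'I_n) : Prop :=
  forall v : 'I_n, exists u : 'I_n, e v u.

(* H(4,3): a 4-cycle 0-1-2-3-0 and a triangle 0-4-5-0 sharing vertex 0. *)
Definition H43_edge_list : seq (nat * nat) :=
  [:: (0,1); (1,2); (2,3); (3,0); (0,4); (4,5); (5,0)]%N.
Definition H43 : rel 'I_6 := fun i j =>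
  ((nat_of_ord i, nat_of_ord j) \in H43_edge_list) ||
  ((nat_of_ord j, nat_of_ord i) \in H43_edge_list).

Definition contains_H43 (n : nat) (e : rel 'I_n) : Prop :=
  exists f : 'I_6 -> 'I_n, injective f /\ forall i j, H43 i j -> e (f i) (f j).

Definition H43_free (n : nat) (e : rel 'I_n) : Prop := ~ contains_H43 e.

Definition adj_mx (R : nzRingType) (n : nat) (e : rel 'I_n) : 'M[R]_n :=
  \matrix_(i, j) (e i j)%:R.

Definition spectral_radius (R : realType) (n : nat) (e : rel 'I_n) (r : R) : Prop :=
  eigenvalue (adj_mx R e) r /\ forall a : R, eigenvalue (adj_mx R e) a -> a <= r.

Definition admissible (m n : nat) (e : rel 'I_n) : Prop :=
  [/\ simple_graph e, H43_free e, num_edges e = m & no_isolated e].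

Definition extremal (R : realType) (m n : nat) (e : rel 'I_n) : Prop :=
  admissible m e /\
  exists r : R, spectral_radius e r /\
    forall (n' : nat) (e' : rel 'I_n') (r' : R),
      admissible m e' -> spectral_radius e' r' -> r' <= r.

Definition perron_vector (R : realType) (n : nat) (e : rel 'I_n) (x : 'cV[R]_n) : Prop :=
  exists r : R, [/\ spectral_radius e r, adj_mx R e *m x = r *: x,
                    (forall i, 0 < x i 0) & \sum_i (x i 0) ^+ 2 = 1].

Definition nbhd (n : nat) (e : rel 'I_n) (u : 'I_n) : {set 'I_n} := [set v | e u v].

Definition A_plus (n : nat) (e : rel 'I_n) (u : 'I_n) : {set 'I_n} :=
  [set v in nbhd e u | (0 < #|[set w in nbhd e u | e v w]|)%N].

(* star K_{1,t} on 'I_t.+1 with center 0 *)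
Definition star_rel (t : nat) : rel 'I_t.+1 :=
  fun i j => (nat_of_ord i == 0%N) != (nat_of_ord j == 0%N).

Definition induced_iso (n : nat) (e : rel 'I_n) (S : {set 'I_n}) (k : nat) (h : rel 'I_k) : Prop :=
  exists f : 'I_k -> 'I_n,
    [/\ injective f, forall v, v \in S <-> exists i, f i = v
      & forall i j, e (f i) (f j) = h i j].

From HB Require Import structures.
From mathcomp Require Import all_boot all_order all_algebra.
From mathcomp Require Import reals.
From mathcomp Require Import ring lra zify.
Set Implicit Arguments. Unset Strict Implicit. Unset Printing Implicit Defensive.
Import Order.TTheory GRing.Theory Num.Theory.

(* The book K_2 v (m/2 - 1)K_1 plus a disjoint edge is H(4,3)-free with m edges, so
   r^2 - r >= m - 2 and r > 13/2. Counting 2-walks from u (where x is maximal) against the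
   degree sum 2m shows that N = N(u) spans at least five edges and is not a matching. If G[N]
   contains a path on four vertices, H(4,3)-freeness confines A_+ to that path and leaves every
   vertex outside N[u] with at most two neighbours in N; counting 3-walks then contradicts
   r > 13/2. Otherwise a vertex c with two neighbours in N lies on every edge of G[N], and
   G[A_+] is the star centred at c. *)

Lemma sum_nat_pred_card (T : finType) (P : pred T) : (\sum_i (P i : nat))%N = #|P|.
Proof.
rewrite -sum1_card [RHS]big_mkcond /=; apply: eq_bigr => i _.
by rewrite unfold_in; case: (P i).
Qed.

Lemma contains_H43_of (n : nat) (e : rel 'I_n) (c p1 p2 p3 q1 q2 : 'I_n) :
  symmetric e -> uniq [:: c; p1; p2; p3; q1; q2] ->
  e c p1 -> e p1 p2 -> e p2 p3 -> e p3 c -> e c q1 -> e q1 q2 -> e q2 c ->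
  contains_H43 e.
Proof.
move=> esym U h1 h2 h3 h4 h5 h6 h7.
exists (fun i : 'I_6 => nth c [:: c; p1; p2; p3; q1; q2] i); split.
  move=> i j /eqP; rewrite (@nth_uniq _ c [:: c; p1; p2; p3; q1; q2] i j (ltn_ord i) (ltn_ord j) U).
  by move/eqP/val_inj.
move=> [[|[|[|[|[|[|i]]]]]] Hi] [[|[|[|[|[|[|j]]]]]] Hj] //=;
  rewrite /H43 /= ?eqxx //= ?(esym c) ?(esym p1) ?(esym p2) ?(esym p3) ?(esym q1) //.
all: by move=> _; rewrite esym.
Qed.

Lemma handshake (n : nat) (e : rel 'I_n) :
  symmetric e -> irreflexive e ->
  (\sum_i #|[set j | e i j]|)%N = (2 * num_edges e)%N.
Proof.
move=> esym eirr.
have -> : (\sum_i #|[set j | e i j]| = \sum_i \sum_j (e i j : nat))%N.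
  by apply: eq_bigr => i _; rewrite cardsE -sum_nat_pred_card.
have -> : (num_edges e = \sum_i \sum_j (e i j && (i < j)%N : nat))%N.
  by rewrite /num_edges cardsE -sum_nat_pred_card pair_bigA.
have -> : (\sum_i \sum_j (e i j : nat) = \sum_i \sum_j (e i j && (i < j)%N : nat)
          + \sum_i \sum_j (e i j && (j < i)%N : nat))%N.
  rewrite -big_split /=; apply: eq_bigr => i _; rewrite -big_split /=.
  apply: eq_bigr => j _; case: (ltngtP i j) => [h|h|h]; rewrite ?andbT ?andbF ?addn0 //.
  by rewrite (val_inj h) eirr.
rewrite mul2n -addnn; congr (_ + _)%N.
by rewrite exchange_big /=; apply: eq_bigr => i _; apply: eq_bigr => j _; rewrite esym.
Qed.

Local Open Scope ring_scope.

(* Collatz--Wielandt: compare an eigenvector with w at a vertex maximising |v_j| / w_j. *)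
Lemma eigenvalue_le_of_supervector (R : realType) n (e : rel 'I_n)
    (w : 'I_n -> R) (lam mu : R) :
  symmetric e -> (forall i, 0 < w i) ->
  (forall i, \sum_j (e i j)%:R * w j <= lam * w i) ->
  eigenvalue (adj_mx R e) mu -> mu <= lam.
Proof.
move=> esym wpos Hw /eigenvalueP [v Hv vn0].
have [i0 Hi0] : exists i, v 0 i != 0.
  apply/existsP; apply: contraR vn0 => /existsPn H; apply/eqP/rowP => i.
  by rewrite !mxE; apply/eqP; have := H i; rewrite negbK.
pose F j := `|v 0 j| / w j.
case: (@arg_maxP _ R 'I_n i0 xpredT F isT) => j _ Hj.
set c := F j.
have cpos : 0 < c.
  by apply: (lt_le_trans _ (Hj i0 isT)); rewrite /F divr_gt0 ?normr_gt0.
have Hvj : `|v 0 j| = c * w j by rewrite /c /F mulrVK // unitfE gt_eqF.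
have Hvle i : `|v 0 i| <= c * w i.
  by have := Hj i isT; rewrite /= -/c /F /= ler_pdivrMr.
have Evj : mu * v 0 j = \sum_i v 0 i * (e i j)%:R.
  have := congr1 (fun M : 'rV[R]_n => M 0 j) Hv; rewrite !mxE => <-.
  by apply: eq_bigr => i _; rewrite mxE.
have H1 : `|mu| * `|v 0 j| <= lam * `|v 0 j|.
  rewrite -normrM Evj; apply: (le_trans (ler_norm_sum _ _ _)).
  apply: (@le_trans _ _ (\sum_i c * ((e j i)%:R * w i))).
    apply: ler_sum => i _; rewrite normrM normr_nat (esym i j) mulrC mulrCA.
    by rewrite ler_wpM2l ?ler0n ?Hvle.
  by rewrite -mulr_sumr Hvj mulrCA ler_wpM2l ?(ltW cpos).
have vjpos : 0 < `|v 0 j| by rewrite Hvj mulr_gt0.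
rewrite ler_pM2r // in H1.
exact: le_trans (ler_norm _) H1.
Qed.

Local Close Scope ring_scope.

(* The book K_2 v tK_1 with hubs 0, 1 and pages 2..t+1, plus a disjoint edge t+2 -- t+3. *)
Definition book_edge_nat (t i j : nat) : bool :=
  [|| (i == 0) && (1 <= j <= t.+1), (j == 0) && (1 <= i <= t.+1),
      (i == 1) && (2 <= j <= t.+1), (j == 1) && (2 <= i <= t.+1),
      (i == t.+2) && (j == t.+3) | (i == t.+3) && (j == t.+2)].

Definition book_edge (t : nat) : rel 'I_t.+4 := fun i j => book_edge_nat t i j.
Arguments book_edge : clear implicits.

Lemma book_edge_nat_sym t i j : book_edge_nat t i j = book_edge_nat t j i.
Proof. by rewrite /book_edge_nat; apply/idP/idP; lia. Qed.

Lemma book_edge_sym t : symmetric (book_edge t).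
Proof. by move=> i j; apply: book_edge_nat_sym. Qed.

Lemma book_edge_irr t : irreflexive (book_edge t).
Proof. by move=> i; rewrite /book_edge /book_edge_nat; apply/negbTE; lia. Qed.

Lemma book_edge_nat_hub_of_deg3 t y a b c :
  book_edge_nat t y a -> book_edge_nat t y b -> book_edge_nat t y c ->
  a != b -> a != c -> b != c -> y <= 1.
Proof. rewrite /book_edge_nat; lia. Qed.

Lemma book_edge_nat_triangle_hub t h a b :
  h <= 1 -> book_edge_nat t h a -> book_edge_nat t h b -> book_edge_nat t a b ->
  a != h -> b != h -> (a <= 1) || (b <= 1).
Proof. rewrite /book_edge_nat; lia. Qed.

Lemma book_edge_nat_hub_nbr t h a : h <= 1 -> book_edge_nat t h a -> a <= t.+1.
Proof. rewrite /book_edge_nat; lia. Qed.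

Lemma book_edge_nat_page_nbr t p a : 2 <= p <= t.+1 -> book_edge_nat t p a -> a <= 1.
Proof. rewrite /book_edge_nat; lia. Qed.

(* The centre of an H(4,3) has degree 4 and lies on a triangle, so it is a hub, as is a
   second triangle vertex; the 4-cycle then needs a third hub. *)
Lemma book_edge_nat_H43_free t f0 f1 f2 f3 f4 f5 :
  uniq [:: f0; f1; f2; f3; f4; f5] ->
  book_edge_nat t f0 f1 -> book_edge_nat t f1 f2 -> book_edge_nat t f2 f3 ->
  book_edge_nat t f3 f0 -> book_edge_nat t f0 f4 -> book_edge_nat t f4 f5 ->
  book_edge_nat t f5 f0 -> False.
Proof.
rewrite /= !inE !negb_or !andbT.
case/and5P => /and5P[d01 d02 d03 d04 d05] /and4P[d12 d13 d14 d15] /and3P[d23 d24 d25] /andP[d34 _] _.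
move=> e01 e12 e23 e30 e04 e45 e50.
have e03 : book_edge_nat t f0 f3 by rewrite book_edge_nat_sym.
have e05 : book_edge_nat t f0 f5 by rewrite book_edge_nat_sym.
have h0 : f0 <= 1 by apply: (book_edge_nat_hub_of_deg3 e01 e03 e04).
have h45 : (f4 <= 1) || (f5 <= 1).
  by apply: (book_edge_nat_triangle_hub h0 e04 e05 e45); rewrite eq_sym.
have h1 : 2 <= f1 <= t.+1.
  by rewrite (book_edge_nat_hub_nbr h0 e01) andbT; clear -h0 h45 d04 d05 d14 d15 d01; lia.
have h2 := book_edge_nat_page_nbr h1 e12.
by clear -h0 h45 h2 d02 d04 d05 d24 d25; lia.
Qed.

Lemma book_edge_H43_free t : H43_free (book_edge t).
Proof.
move=> [f [finj fe]].
pose o k (hk : k < 6) := Ordinal hk.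
apply: (@book_edge_nat_H43_free t (f (o 0 isT)) (f (o 1 isT)) (f (o 2 isT))
          (f (o 3 isT)) (f (o 4 isT)) (f (o 5 isT))); try by apply: fe.
have U : uniq (map (fun i => val (f i)) [:: o 0 isT; o 1 isT; o 2 isT; o 3 isT; o 4 isT; o 5 isT]).
  by rewrite map_inj_uniq // => i j /val_inj/finj.
exact: U.
Qed.

Lemma book_edge_no_isolated t : no_isolated (book_edge t).
Proof.
move=> v; have hv := ltn_ord v.
case: (eqVneq (v : nat) 0) => [v0|v0].
  by exists (inord 1); rewrite /book_edge inordK // v0.
case: (boolP (nat_of_ord v <= t.+1)) => v1.
  by exists (inord 0); rewrite /book_edge inordK //; move: v0 v1; rewrite /book_edge_nat; lia.
case: (eqVneq (v : nat) t.+2) => [v2|v2].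
  by exists (inord t.+3); rewrite /book_edge inordK // v2 /book_edge_nat; lia.
by exists (inord t.+2); rewrite /book_edge inordK //; move: v0 v1 v2 hv; rewrite /book_edge_nat; lia.
Qed.

Lemma big_split_book (V : Type) (idx : V) (op : Monoid.com_law idx) t (F : nat -> V) :
  \big[op/idx]_(i < t.+4) F i =
  op (op (op (op (F 0) (F 1)) (\big[op/idx]_(2 <= i < t.+2) F i)) (F t.+2)) (F t.+3).
Proof.
rewrite -(big_mkord xpredT F) big_ltn // big_ltn // big_nat_recr //= big_nat_recr //=.
by rewrite !Monoid.mulmA.
Qed.

Lemma sum_pages_const t (F : nat -> nat) k :
  (forall j, 2 <= j < t.+2 -> F j = k) -> \sum_(2 <= j < t.+2) F j = t * k.
Proof.
move=> h; rewrite (eq_big_nat _ _ h) sum_nat_const_nat.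
by have -> : t.+2 - 2 = t by lia.
Qed.

Definition book_deg t i : nat := \sum_(j < t.+4) book_edge_nat t i j.

Lemma book_degE t i : i < t.+4 ->
  book_deg t i = if i <= 1 then t.+1 else if i <= t.+1 then 2 else 1.
Proof.
move=> hi; rewrite /book_deg (big_split_book _ t (fun j => book_edge_nat t i j : nat)) /=.
case: (boolP (i <= 1)) => h1.
  rewrite (@sum_pages_const t _ 1); last first.
    by move=> j hj; move: h1 hj; rewrite /book_edge_nat; case: (book_edge_nat t i j); lia.
  by move: h1; rewrite /book_edge_nat; lia.
rewrite (@sum_pages_const t _ 0); last by move=> j hj; move: h1 hj hi; rewrite /book_edge_nat; lia.
by case: (boolP (i <= t.+1)) => h2; move: h1 h2 hi; rewrite /book_edge_nat; lia.
Qed.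

Lemma book_edge_num_edges t : num_edges (book_edge t) = 2 * t + 2.
Proof.
have := handshake (@book_edge_sym t) (@book_edge_irr t).
have -> : \sum_(i < t.+4) #|[set j | book_edge t i j]| = \sum_(i < t.+4) book_deg t i.
  by apply: eq_bigr => i _; rewrite cardsE -sum_nat_pred_card.
rewrite (big_split_book _ t (book_deg t)) !book_degE // (@sum_pages_const t _ 2); last first.
  by move=> j hj; rewrite book_degE; [rewrite ifF ?ifT //; lia | lia].
by rewrite /= ltnn (_ : (t.+2 < t.+1) = false); [lia | lia].
Qed.

Section BookRadius.
Variable R : realType.
Local Open Scope ring_scope.

Definition book_radius (t : nat) : R := (1 + Num.sqrt (1 + 8%:R * t%:R)) / 2.

Lemma book_radius_eq t : book_radius t ^+ 2 - book_radius t = 2%:R * t%:R.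
Proof.
have h0 : 0 <= 1 + 8%:R * t%:R :> R by rewrite addr_ge0 ?mulr_ge0 ?ler0n.
have hs := sqr_sqrtr h0.
rewrite /book_radius; set s := Num.sqrt _ in hs *.
have -> : ((1 + s) / 2) ^+ 2 - (1 + s) / 2 = (s ^+ 2 - 1) / 4%:R :> R.
  by field; rewrite ?pnatr_eq0.
by rewrite hs; field; rewrite ?pnatr_eq0.
Qed.

Lemma book_radius_ge1 t : 1 <= book_radius t.
Proof.
have h0 : 0 <= 1 + 8%:R * t%:R :> R by rewrite addr_ge0 ?mulr_ge0 ?ler0n.
have hs := sqr_sqrtr h0.
have hs0 : 0 <= Num.sqrt (1 + 8%:R * t%:R) :> R := sqrtr_ge0 _.
rewrite /book_radius; set s := Num.sqrt _ in hs hs0 *.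
have ht : 0 <= t%:R :> R by rewrite ler0n.
have s1 : 1 <= s by nra.
lra.
Qed.

(* Value 1 on the hubs and 2/r on the pages; for r = book_radius t this is an eigenvector
   when the pendant edge gets value 0, and a positive supervector when it gets value 1. *)
Definition book_vector (r k : R) t (j : nat) : R :=
  if (j <= 1)%N then 1 else if (j <= t.+1)%N then 2 / r else k.

Lemma book_vector_rowsum t (r k : R) (i : nat) : (i < t.+4)%N ->
  \sum_(j < t.+4) (book_edge_nat t i j)%:R * book_vector r k t j =
  if (i <= 1)%N then 1 + t%:R * (2 / r) else if (i <= t.+1)%N then 2 else k.
Proof.
move=> hi.
rewrite (big_split_book _ t (fun j => (book_edge_nat t i j)%:R * book_vector r k t j)) /=.
have -> : book_vector r k t t.+2 = k by rewrite /book_vector ifF ?ifF //; lia.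
have -> : book_vector r k t t.+3 = k by rewrite /book_vector ifF ?ifF //; lia.
have -> : \sum_(2 <= j < t.+2) (book_edge_nat t i j)%:R * book_vector r k t j =
          (\sum_(2 <= j < t.+2) (book_edge_nat t i j : nat))%:R * (2 / r).
  rewrite natr_sum mulr_suml; apply: eq_big_nat => j hj.
  by rewrite /book_vector ifF ?ifT //; lia.
rewrite /book_vector /= !mulr1.
have E (a b p : nat) : (book_edge_nat t i 0 + book_edge_nat t i 1 = a)%N ->
    (book_edge_nat t i t.+2 + book_edge_nat t i t.+3 = b)%N ->
    (forall j, (2 <= j < t.+2)%N -> (book_edge_nat t i j : nat) = p) ->
    (book_edge_nat t i 0)%:R + (book_edge_nat t i 1)%:R
    + (\sum_(2 <= j < t.+2) (book_edge_nat t i j : nat))%:R * (2 / r)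
    + (book_edge_nat t i t.+2)%:R * k + (book_edge_nat t i t.+3)%:R * k
    = a%:R + (t * p)%:R * (2 / r) + b%:R * k.
  by move=> ha hb hp; rewrite (sum_pages_const hp) -ha -hb !natrD; ring.
case: (boolP (i <= 1)%N) => h1.
  rewrite (E 1%N 0%N 1%N); first by rewrite muln1; ring.
  - by move: h1; rewrite /book_edge_nat; lia.
  - by move: h1; rewrite /book_edge_nat; lia.
  - by move=> j hj; move: h1 hj; rewrite /book_edge_nat; case: (book_edge_nat t i j); lia.
case: (boolP (i <= t.+1)%N) => h2.
  rewrite (E 2%N 0%N 0%N); first by rewrite muln0; ring.
  - by move: h1 h2; rewrite /book_edge_nat; lia.
  - by move: h1 h2; rewrite /book_edge_nat; lia.
  - by move=> j hj; move: h1 h2 hj; rewrite /book_edge_nat; lia.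
rewrite (E 0%N 1%N 0%N); first by rewrite muln0; ring.
- by move: h1 h2 hi; rewrite /book_edge_nat; lia.
- by move: h1 h2 hi; rewrite /book_edge_nat; lia.
- by move=> j hj; move: h1 h2 hj hi; rewrite /book_edge_nat; lia.
Qed.

Lemma book_edge_spectral_radius t : spectral_radius (book_edge t) (book_radius t).
Proof.
set r := book_radius t.
have r1 : 1 <= r := book_radius_ge1 t.
have rn0 : r != 0 by apply/eqP => r0; rewrite r0 in r1; lra.
have pages : t%:R * (2 / r) = r - 1.
  apply: (mulIf rn0); rewrite -mulrA mulfVK // mulrBl mul1r -expr2.
  by rewrite book_radius_eq; ring.
have colsum k (j : 'I_t.+4) :
    \sum_(i < t.+4) book_vector r k t i * (book_edge t i j)%:R =
    if (j <= 1)%N then 1 + t%:R * (2 / r) else if (j <= t.+1)%N then 2 else k.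
  rewrite -(book_vector_rowsum r k (ltn_ord j)); apply: eq_bigr => i _.
  by rewrite /book_edge -/(book_edge t j i) book_edge_sym mulrC.
split.
  apply/eigenvalueP; exists (\row_j book_vector r 0 t j).
    apply/rowP => j; rewrite !mxE.
    under eq_bigr do rewrite !mxE.
    rewrite colsum /book_vector pages.
    case: (j <= 1)%N; first by rewrite mulr1; ring.
    case: (j <= t.+1)%N; last by rewrite mulr0.
    by rewrite mulrC mulfVK.
  apply/eqP => /rowP /(_ ord0); rewrite !mxE /book_vector /= => /eqP.
  by rewrite oner_eq0.
move=> mu hmu.
apply: (eigenvalue_le_of_supervector (w := book_vector r 1 t) (@book_edge_sym t) _ _ hmu).
  move=> i; rewrite /book_vector; case: (i <= 1)%N => //; case: (i <= t.+1)%N => //.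
  by rewrite divr_gt0 //; lra.
move=> i; rewrite /book_edge (book_vector_rowsum r 1 (ltn_ord i)) /book_vector pages.
case: (i <= 1)%N; first by lra.
case: (i <= t.+1)%N; last by lra.
by rewrite mulrC mulfVK.
Qed.

End BookRadius.

Definition degN (n : nat) (e : rel 'I_n) (u v : 'I_n) : nat :=
  #|[set w in nbhd e u | e v w]|.

(* The bounds that a 4-vertex path inside N(u) forces on H(4,3)-free graphs. *)
Definition nbhd_sparse (n : nat) (e : rel 'I_n) (u : 'I_n) : Prop :=
  [/\ forall v, e u v -> (degN e u v <= 3)%N,
      (\sum_v (e u v : nat) * (degN e u v * (1 + degN e u v)) <= 48)%N
    & forall w, w != u -> ~~ e u w -> (degN e u w <= 2)%N].

Section Spectral.
Variable R : realType.
Local Open Scope ring_scope.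
Variables (n m : nat) (e : rel 'I_n) (u : 'I_n) (x : 'I_n -> R) (r : R).
Hypotheses (esym : symmetric e) (eirr : irreflexive e) (hedges : num_edges e = m).
Hypotheses (xpos : forall i, 0 < x i) (xmax : forall i, x i <= x u).
Hypothesis eig : forall i, r * x i = \sum_j (e i j)%:R * x j.
Hypotheses (hm : (38 <= m)%N) (hr : m%:R - 2 <= r ^+ 2 - r).

Definition adj (i j : 'I_n) : R := (e i j)%:R.
(* indicator of W, the vertices at distance at least 2 from u *)
Definition inW (z : 'I_n) : R := ((z != u) && ~~ e u z)%:R.
Definition dNr (z : 'I_n) : R := \sum_y adj u y * adj z y.
Definition dWr (z : 'I_n) : R := \sum_y adj z y * inW y.

(* With N = N(u): du = d(u), sN = 2e(N), eNW = e(N,W), sW = 2e(W); alpha and beta are the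
   contributions of N and W to the number of 2-walks r^2 x_u. *)
Let xu := x u.
Let du := \sum_v adj u v.
Let sN := \sum_v adj u v * dNr v.
Let eNW := \sum_w inW w * dNr w.
Let sW := \sum_w inW w * dWr w.
Let alpha := \sum_v adj u v * (dNr v * x v).
Let beta := \sum_w inW w * (dNr w * x w).

Lemma adj_sym i j : adj i j = adj j i. Proof. by rewrite /adj esym. Qed.
Lemma adj_ge0 i j : 0 <= adj i j. Proof. by rewrite ler0n. Qed.
Lemma adj_le1 i j : adj i j <= 1. Proof. by rewrite /adj; case: (e i j). Qed.
Lemma inW_ge0 i : 0 <= inW i. Proof. by rewrite ler0n. Qed.

Lemma dNrE z : dNr z = (degN e u z)%:R.
Proof.
rewrite /degN cardsE -sum_nat_pred_card natr_sum; apply: eq_bigr => y _.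
by rewrite /adj /nbhd !inE; case: (e u y); case: (e z y); rewrite /= ?mulr0 ?mulr1 ?mul0r.
Qed.

Lemma dNr_ge0 z : 0 <= dNr z. Proof. by rewrite dNrE ler0n. Qed.
Lemma dWr_ge0 z : 0 <= dWr z.
Proof. by apply: sumr_ge0 => y _; rewrite mulr_ge0 ?adj_ge0 ?inW_ge0. Qed.
Lemma eNW_ge0 : 0 <= eNW.
Proof. by apply: sumr_ge0 => w _; rewrite mulr_ge0 ?inW_ge0 ?dNr_ge0. Qed.
Lemma sW_ge0 : 0 <= sW.
Proof. by apply: sumr_ge0 => w _; rewrite mulr_ge0 ?inW_ge0 ?dWr_ge0. Qed.
Lemma xu_gt0 : 0 < xu. Proof. exact: xpos. Qed.

Lemma sum_split_uNW (F : 'I_n -> R) :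
  \sum_z F z = F u + \sum_z adj u z * F z + \sum_z inW z * F z.
Proof.
have H z : F z = (z == u)%:R * F z + adj u z * F z + inW z * F z.
  rewrite /adj /inW; case: (eqVneq z u) => [->|nzu].
    by rewrite eirr /= mul1r !mul0r !addr0.
  by case: (e u z); rewrite /=; lra.
rewrite [LHS](eq_bigr _ (fun z _ => H z)) !big_split /=; congr (_ + _ + _).
by rewrite (bigD1 u) //= eqxx mul1r big1 ?addr0 // => z /negbTE ->; rewrite mul0r.
Qed.

Lemma sum_adj_split z : \sum_y adj z y = adj z u + dNr z + dWr z.
Proof.
by rewrite sum_split_uNW /dNr /dWr; congr (_ + _ + _); apply: eq_bigr => y _; rewrite mulrC.
Qed.

Lemma sumN_dWr : \sum_v adj u v * dWr v = eNW.
Proof.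
rewrite /eNW /dWr /dNr; under eq_bigr do rewrite mulr_sumr.
rewrite exchange_big /=; apply: eq_bigr => y _.
by rewrite mulr_sumr; apply: eq_bigr => v _; rewrite (adj_sym y v); ring.
Qed.

Lemma twice_edges_split : 2 * m%:R = 2 * du + sN + 2 * eNW + sW.
Proof.
have -> : 2 * m%:R = \sum_z \sum_y adj z y.
  rewrite -natrM -hedges -handshake // natr_sum; apply: eq_bigr => z _.
  by rewrite cardsE -sum_nat_pred_card natr_sum.
rewrite sum_split_uNW.
have -> : \sum_z adj u z * \sum_y adj z y = du + sN + eNW.
  rewrite -sumN_dWr /sN /du -!big_split /=; apply: eq_bigr => v _.
  by rewrite sum_adj_split (adj_sym v u) /adj; case: (e u v); rewrite /=; ring.
have -> : \sum_z inW z * \sum_y adj z y = eNW + sW.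
  rewrite /eNW /sW -big_split /=; apply: eq_bigr => w _.
  rewrite sum_adj_split /inW (adj_sym w u) /adj.
  by case: (w != u); case: (e u w); rewrite /=; ring.
rewrite /du; ring.
Qed.

Lemma radius_u : r * xu = \sum_v adj u v * x v.
Proof. exact: eig. Qed.

Lemma sq_radius_u : r ^+ 2 * xu = du * xu + alpha + beta.
Proof.
have -> : r ^+ 2 * xu = \sum_z dNr z * x z.
  rewrite expr2 -mulrA radius_u mulr_sumr.
  under eq_bigr do rewrite mulrCA eig mulr_sumr.
  rewrite exchange_big /=; apply: eq_bigr => z _.
  by rewrite /dNr mulr_suml; apply: eq_bigr => v _; rewrite (adj_sym z v); ring.
rewrite sum_split_uNW; congr (_ * _ + _ + _).
by rewrite /dNr /du; apply: eq_bigr => y _; rewrite /adj; case: (e u y); rewrite /= ?mulr0 ?mulr1.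
Qed.

Lemma alpha_le : alpha <= sN * xu.
Proof.
rewrite /sN mulr_suml; apply: ler_sum => v _.
by rewrite mulrA ler_wpM2l ?mulr_ge0 ?adj_ge0 ?dNr_ge0.
Qed.

Lemma beta_le : beta <= eNW * xu.
Proof.
rewrite /eNW mulr_suml; apply: ler_sum => v _.
by rewrite mulrA ler_wpM2l ?mulr_ge0 ?inW_ge0 ?dNr_ge0.
Qed.

Lemma radius_ge0 : 0 <= r.
Proof.
have : 0 <= r * xu.
  by rewrite radius_u; apply: sumr_ge0 => v _; rewrite mulr_ge0 ?adj_ge0 ?ltW.
by rewrite pmulr_lge0 ?xu_gt0.
Qed.

Lemma radius_gt : 13%:R / 2 < r.
Proof.
have : 38%:R <= m%:R :> R by rewrite ler_nat.
have := radius_ge0; move: hr; nra.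
Qed.

Lemma sumN_dNr_gt9 : 9%:R < sN.
Proof.
have : r ^+ 2 <= m%:R + sN / 2.
  have := twice_edges_split; have := alpha_le; have := beta_le; have := sW_ge0.
  have := sq_radius_u; have := xu_gt0 => xu0 *.
  have : r ^+ 2 * xu <= (m%:R + sN / 2) * xu by nra.
  by rewrite ler_pM2r.
by have := radius_gt; move: hr; lra.
Qed.

Lemma sumN_degN_ge10 : (10 <= \sum_v (e u v : nat) * degN e u v)%N.
Proof.
rewrite -(ltr_nat R); apply: lt_le_trans sumN_dNr_gt9 _.
rewrite /sN natr_sum le_eqVlt; apply/orP; left; apply/eqP.
by apply: eq_bigr => v _; rewrite dNrE natrM.
Qed.

Lemma exists_nbr_degN_gt1 : [exists v, e u v && (1 < degN e u v)%N].
Proof.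
apply: contraT => /existsPn le1.
have alpha_le_r : alpha <= r * xu.
  rewrite radius_u /alpha; apply: ler_sum => v _.
  rewrite /adj; case: (boolP (e u v)) => huv /=; last by rewrite !mul0r.
  have := le1 v; rewrite huv /= -leqNgt -(ler_nat R) -dNrE => h.
  by rewrite !mul1r; have := xpos v; nra.
have := twice_edges_split; have := beta_le; have := sW_ge0; have := sq_radius_u.
have := sumN_dNr_gt9; have := xu_gt0 => xu0 *.
have : (r ^+ 2 - r) * xu <= (m%:R - sN / 2) * xu by nra.
by rewrite ler_pM2r //; move: hr; lra.
Qed.

Definition radius_W_part (v : 'I_n) : R := \sum_z inW z * (adj v z * x z).

Lemma radius_W_part_ge0 v : 0 <= radius_W_part v.
Proof. by apply: sumr_ge0 => z _; rewrite !mulr_ge0 ?inW_ge0 ?adj_ge0 ?ltW. Qed.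

Lemma sumN_radius_W_part : \sum_v adj u v * radius_W_part v = beta.
Proof.
rewrite /beta /radius_W_part; under eq_bigr do rewrite mulr_sumr.
rewrite exchange_big /=; apply: eq_bigr => z _.
rewrite /dNr mulr_suml mulr_sumr; apply: eq_bigr => v _.
by rewrite (adj_sym z v); ring.
Qed.

Lemma radius_le_nbr v : r * x v <= xu + dNr v * xu + radius_W_part v.
Proof.
rewrite eig sum_split_uNW; apply: lerD => //; apply: lerD.
- by rewrite /xu; have := adj_le1 v u; have := xpos u; nra.
- rewrite /dNr mulr_suml; apply: ler_sum => z _.
  by rewrite mulrA ler_wpM2l ?mulr_ge0 ?adj_ge0.
Qed.

Lemma radius_le_deg w : r * x w <= (\sum_y adj w y) * xu.
Proof.
by rewrite eig mulr_suml; apply: ler_sum => z _; rewrite ler_wpM2l ?adj_ge0.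
Qed.

Lemma alpha_beta_ge : (2 * r + 2 * eNW + sW - 4) * xu <= alpha + 2 * beta.
Proof.
have h : (m%:R - 2) * xu <= r ^+ 2 * xu - r * xu by rewrite -mulrBl ler_pM2r ?xu_gt0.
rewrite sq_radius_u in h.
have := twice_edges_split; have := alpha_le; have := xu_gt0 => *; nra.
Qed.

Section Sparse.
Hypothesis sparse : nbhd_sparse e u.

Lemma radius_alpha_le : r * alpha <= 48%:R * xu + 3%:R * beta.
Proof.
case: sparse => le3 le48 _.
have sum48 : \sum_v adj u v * (dNr v * (1 + dNr v)) <= 48%:R.
  rewrite -(ler_nat R) natr_sum in le48; apply: le_trans le48.
  by rewrite le_eqVlt; apply/orP; left; apply/eqP; apply: eq_bigr => v _;
    rewrite dNrE /adj !natrM natrD.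
rewrite -sumN_radius_W_part /alpha mulr_sumr.
apply: (@le_trans _ _ (\sum_v (adj u v * (dNr v * (1 + dNr v)) * xu
                                 + 3%:R * (adj u v * radius_W_part v)))).
  apply: ler_sum => v _; rewrite /adj; case: (boolP (e u v)) => huv /=.
    have hc : dNr v <= 3%:R by rewrite dNrE ler_nat le3.
    have := dNr_ge0 v; have := radius_le_nbr v; have := radius_W_part_ge0 v.
    by rewrite !mul1r; nra.
  by rewrite !(mul0r, mulr0, addr0).
by rewrite big_split /= -mulr_suml -mulr_sumr lerD2r ler_pM2r ?xu_gt0.
Qed.

Lemma radius_beta_le : r * beta <= 2%:R * (eNW + sW) * xu.
Proof.
case: sparse => _ _ le2.
rewrite /beta /eNW /sW -big_split /= mulr_sumr mulr_sumr mulr_suml.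
apply: ler_sum => w _; rewrite /inW.
case: (boolP ((w != u) && ~~ e u w)) => /= [/andP [wu nuw]|_]; last first.
  by rewrite !(mul0r, mulr0, addr0).
rewrite !mul1r.
have hc : dNr w <= 2%:R by rewrite dNrE ler_nat le2.
have hwu : adj w u = 0 by rewrite /adj esym (negbTE nuw).
have := radius_le_deg w; rewrite sum_adj_split hwu add0r => h.
have := ler_wpM2l (dNr_ge0 w) h.
have : 0 <= (2%:R - dNr w) * ((dNr w + dWr w) * xu).
  by rewrite mulr_ge0 ?subr_ge0 // mulr_ge0 ?addr_ge0 ?dNr_ge0 ?dWr_ge0 ?ltW ?xu_gt0.
nra.
Qed.

(* Multiply alpha_beta_ge by r^2 and bound r*alpha, r*beta: the resulting cubic
   inequality in r fails for r > 13/2. *)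
Lemma not_nbhd_sparse : False.
Proof.
have r13 := radius_gt; have xu0 := xu_gt0.
have := radius_alpha_le; have := radius_beta_le; have := alpha_beta_ge.
have := eNW_ge0; have := sW_ge0 => hK hD F1 F3 F2.
have hbe : 0 <= beta.
  by apply: sumr_ge0 => w _; rewrite !mulr_ge0 ?inW_ge0 ?dNr_ge0 ?ltW.
have : r ^+ 2 * (2 * r + 2 * eNW + sW - 4) * xu
       <= (48%:R * r + 2%:R * (3%:R + 2%:R * r) * (eNW + sW)) * xu.
  have r0 : 0 <= r ^+ 2 by rewrite sqr_ge0.
  have := ler_wpM2l r0 F1; nra.
rewrite ler_pM2r // => H.
have q1 : 0 <= (r ^+ 2 - 2%:R * r - 3%:R) * eNW by rewrite mulr_ge0 //; nra.
have q2 : 0 <= (r ^+ 2 - 4%:R * r - 6%:R) * sW by rewrite mulr_ge0 //; nra.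
have q3 : 0 < r * (2%:R * r ^+ 2 - 4%:R * r - 48%:R) by rewrite mulr_gt0 //; nra.
nra.
Qed.

End Sparse.

End Spectral.

Lemma induced_iso_star (n : nat) (e : rel 'I_n) (c : 'I_n) (L : {set 'I_n}) :
  symmetric e -> irreflexive e -> (forall v, v \in L -> e c v) ->
  {in L &, forall v w, ~~ e v w} -> induced_iso e (c |: L) (@star_rel #|L|).
Proof.
move=> esym eirr Lc Lfree.
have Lnth k : (k < #|L|)%N -> nth c (enum L) k \in L.
  by move=> hk; rewrite -mem_enum mem_nth // -cardE.
have cL : c \notin L by apply/negP => /Lc; rewrite eirr.
pose f (i : 'I_#|L|.+1) := if val i is k.+1 then nth c (enum L) k else c.
exists f; split.
- move=> [[|i] hi] [[|j] hj]; rewrite /f /= => E; apply: val_inj => //=.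
  + by move: (Lnth j hj) cL; rewrite -E => ->.
  + by move: (Lnth i hi) cL; rewrite E => ->.
  + congr S; apply/eqP; rewrite -(nth_uniq c _ _ (enum_uniq L)) ?E //; rewrite -cardE //.
- move=> v; rewrite !inE; split.
  + case/orP => [/eqP ->|vL]; first by exists ord0.
    have hi : ((index v (enum L)).+1 < #|L|.+1)%N by rewrite ltnS cardE index_mem mem_enum.
    by exists (Ordinal hi); rewrite /f /= nth_index ?mem_enum.
  + by case=> [[[|k] hk] <-]; rewrite /f /= ?eqxx // Lnth ?orbT.
- move=> [[|i] hi] [[|j] hj]; rewrite /f /star_rel /=.
  + by rewrite eirr.
  + exact: Lc (Lnth j hj).
  + by rewrite esym Lc ?Lnth.
  + by apply/negbTE/Lfree; apply: Lnth.
Qed.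

Section NbhdStructure.
Variables (n : nat) (e : rel 'I_n) (u : 'I_n).
Hypotheses (esym : symmetric e) (eirr : irreflexive e) (hfree : H43_free e).

Ltac distinct :=
  rewrite /= ?inE ?negb_or ?andbT; repeat (apply/andP; split);
  apply/negP => /eqP ?; subst;
  match goal with
  | H : is_true (e ?z ?z) |- _ => by rewrite eirr in H
  | H : is_true (~~ ?b), H' : is_true ?b |- _ => by rewrite H' in H
  | H : is_true (?z != ?z) |- _ => by rewrite eqxx in H
  | H : is_true (uniq _) |- _ => by move: H; rewrite /= !inE !eqxx ?orbT ?andbF
  end.

Ltac nbhd_done := by [ | rewrite esym | distinct].

Lemma in_A_plus v : (v \in A_plus e u) = e u v && (0 < degN e u v)%N.
Proof. by rewrite !inE. Qed.

Lemma in_nbhdN v w : (w \in [set w in nbhd e u | e v w]) = e u w && e v w.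
Proof. by rewrite !inE. Qed.

Lemma uniq_nbhd_cons (s : seq 'I_n) : all (e u) s -> uniq (u :: s) = uniq s.
Proof.
move=> /allP us; rewrite /= andbC; case: (uniq s) => //=.
by apply/negP => /us; rewrite eirr.
Qed.

(* 4-cycle u-a-b-c and triangle u-p-q. *)
Lemma H43_free_no_P3_K2 a b c p q :
  uniq [:: a; b; c; p; q] -> e u a -> e u b -> e u c -> e u p -> e u q ->
  e a b -> e b c -> e p q -> False.
Proof.
move=> U ua ub uc up uq ab bc pq; apply: hfree.
apply: (@contains_H43_of _ _ u a b c p q); rewrite ?(esym c) ?(esym q) //.
by rewrite uniq_nbhd_cons //= ua ub uc up uq.
Qed.

(* 4-cycle u-a-w-b and triangle u-p-q. *)
Lemma H43_free_no_W_cherry_K2 a b p q w :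
  uniq [:: a; b; p; q] -> e u a -> e u b -> e u p -> e u q -> w != u -> ~~ e u w ->
  e w a -> e w b -> e p q -> False.
Proof.
move=> U ua ub up uq wu uw wa wb pq; apply: hfree.
apply: (@contains_H43_of _ _ u a w b p q); rewrite ?(esym a) ?(esym b) ?(esym q) //.
by distinct.
Qed.

Lemma nbhdN_sub_A_plus v : e u v -> [set w in nbhd e u | e v w] \subset A_plus e u :\ v.
Proof.
move=> uv; apply/subsetP => w; rewrite in_nbhdN => /andP [uw vw].
rewrite in_setD1 in_A_plus uw; apply/andP; split; first by apply: contraTneq vw => ->; rewrite eirr.
by apply/card_gt0P; exists v; rewrite in_nbhdN uv esym.
Qed.

Lemma degN_le_card_A_plus v : e u v -> (degN e u v <= #|A_plus e u|.-1)%N.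
Proof.
move=> uv; have := subset_leq_card (nbhdN_sub_A_plus uv).
case: (boolP (v \in A_plus e u)) => hv; first by rewrite (cardsD1 v (A_plus e u)) hv.
by move: hv; rewrite in_A_plus uv /= -eqn0Ngt /degN => /eqP ->.
Qed.

Lemma sumN_le_card_A_plus (k : nat) (F : 'I_n -> nat) :
  (forall v, e u v -> (0 < degN e u v)%N -> (F v <= k)%N) ->
  (forall v, degN e u v = 0%N -> F v = 0%N) ->
  (\sum_v (e u v : nat) * F v <= #|A_plus e u| * k)%N.
Proof.
move=> Fk F0; rewrite -sum1_card big_distrl /= [X in (_ <= X)%N]big_mkcond /=.
apply: leq_sum => v _; rewrite in_A_plus.
case: (boolP (e u v)) => uv //=; case: (posnP (degN e u v)) => d0 /=; first by rewrite F0.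
by rewrite !mul1n Fk.
Qed.

Lemma card_A_plus_ge4 :
  (10 <= \sum_v (e u v : nat) * degN e u v)%N -> (4 <= #|A_plus e u|)%N.
Proof.
move=> h; have := leq_trans h (sumN_le_card_A_plus (fun v uv _ => degN_le_card_A_plus uv)
                                                 (fun v d0 => d0)).
by case: #|A_plus e u| => [|[|[|[|k]]]].
Qed.

Definition nbhd_path4 (p1 p2 p3 p4 : 'I_n) : Prop :=
  [/\ [&& e u p1, e u p2, e u p3 & e u p4], uniq [:: p1; p2; p3; p4]
    & [&& e p1 p2, e p2 p3 & e p3 p4]].

(* With a path p1-p2-p3-p4 in N, every vertex of A_+ is some p_i, and a vertex of W has at
   most two neighbours in N: otherwise we would find a P_3 + K_2 in N or a "cherry" below an
   edge of N, i.e. an H(4,3). *)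
Lemma A_plus_sub_path4 p1 p2 p3 p4 :
  nbhd_path4 p1 p2 p3 p4 -> A_plus e u \subset [set z | z \in [:: p1; p2; p3; p4]].
Proof.
case=> /and4P [u1 u2 u3 u4] U /and3P [e12 e23 e34].
apply/subsetP => z; rewrite in_A_plus => /andP [uz /card_gt0P [z' ]].
rewrite in_nbhdN => /andP [uz' zz']; rewrite inE; apply: contraT.
rewrite !inE !negb_or => /and4P [z1 z2 z3 z4]; exfalso.
case: (eqVneq z' p1) => [?|n1]; first by subst; apply: (@H43_free_no_P3_K2 p2 p3 p4 z p1); nbhd_done.
case: (eqVneq z' p2) => [?|n2].
  by subst; apply: (@H43_free_no_P3_K2 z p2 p1 p3 p4); nbhd_done.
case: (eqVneq z' p3) => [?|n3]; first by subst; apply: (@H43_free_no_P3_K2 z p3 p4 p1 p2); nbhd_done.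
case: (eqVneq z' p4) => [?|n4]; first by subst; apply: (@H43_free_no_P3_K2 p1 p2 p3 z p4); nbhd_done.
by apply: (@H43_free_no_P3_K2 p1 p2 p3 z z'); nbhd_done.
Qed.

Lemma W_degN_le2_of_path4 p1 p2 p3 p4 w :
  nbhd_path4 p1 p2 p3 p4 -> w != u -> ~~ e u w -> (degN e u w <= 2)%N.
Proof.
case=> /and4P [u1 u2 u3 u4] U /and3P [e12 e23 e34] wu uw.
rewrite leqNgt; apply/negP => /card_gt2P [y1 [y2 [y3 [[]]]]].
rewrite !in_nbhdN => /andP [uy1 wy1] /andP [uy2 wy2] /andP [uy3 wy3] [d12 d23 d31].
have not12 y : (y == p3) || (y == p4) -> (y != p1) && (y != p2).
  by case/orP => /eqP ->; apply/andP; split; distinct.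
(* Two of the y_i avoid {p3, p4}, or two are p3, p4 and then avoid {p1, p2}. *)
case: (boolP ((y1 == p3) || (y1 == p4))) => [/not12/andP [? ?]|/norP [? ?]];
case: (boolP ((y2 == p3) || (y2 == p4))) => [/not12/andP [? ?]|/norP [? ?]];
case: (boolP ((y3 == p3) || (y3 == p4))) => [/not12/andP [? ?]|/norP [? ?]];
first [ by apply: (@H43_free_no_W_cherry_K2 y1 y2 p1 p2 w); nbhd_done
      | by apply: (@H43_free_no_W_cherry_K2 y1 y3 p1 p2 w); nbhd_done
      | by apply: (@H43_free_no_W_cherry_K2 y2 y3 p1 p2 w); nbhd_done
      | by apply: (@H43_free_no_W_cherry_K2 y1 y2 p3 p4 w); nbhd_done
      | by apply: (@H43_free_no_W_cherry_K2 y1 y3 p3 p4 w); nbhd_done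
      | by apply: (@H43_free_no_W_cherry_K2 y2 y3 p3 p4 w); nbhd_done ].
Qed.

Lemma nbhd_sparse_of_path4 p1 p2 p3 p4 : nbhd_path4 p1 p2 p3 p4 -> nbhd_sparse e u.
Proof.
move=> P.
have A4 : (#|A_plus e u| <= 4)%N.
  apply: leq_trans (subset_leq_card (A_plus_sub_path4 P)) _.
  by rewrite cardsE; exact: card_size.
have le3 v : e u v -> (degN e u v <= 3)%N.
  by move=> uv; apply: leq_trans (degN_le_card_A_plus uv) _; rewrite -ltnS; case: #|_| A4.
split => //; last by move=> w; apply: W_degN_le2_of_path4 P.
apply: leq_trans (@sumN_le_card_A_plus 12 _ _ _) _.
- by move=> v uv _; move: (le3 v uv); case: (degN e u v) => [|[|[|[|k]]]].
- by move=> v ->.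
- exact: leq_mul A4 (leqnn 12).
Qed.

Lemma exists_notin3 (A : {set 'I_n}) (a b c : 'I_n) :
  (4 <= #|A|)%N -> exists2 y, y \in A & y \notin [:: a; b; c].
Proof.
move=> A4; have : (0 < #|A :\: [set y | y \in [:: a; b; c]]|)%N.
  rewrite cardsD subn_gt0; apply: leq_trans A4; rewrite ltnS.
  apply: leq_trans (subset_leq_card (subsetIr _ _)) _.
  by rewrite cardsE; exact: card_size.
by case/card_gt0P => y; rewrite in_setD inE => /andP [? ?]; exists y.
Qed.

Section NoPath4.
Variable c : 'I_n.
Hypotheses (noP4 : forall p1 p2 p3 p4, ~ nbhd_path4 p1 p2 p3 p4).
Hypotheses (uc : e u c) (c_hub : (1 < degN e u c)%N) (A4 : (4 <= #|A_plus e u|)%N).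

Lemma no_path4 p1 p2 p3 p4 : e u p1 -> e u p2 -> e u p3 -> e u p4 ->
  uniq [:: p1; p2; p3; p4] -> e p1 p2 -> e p2 p3 -> e p3 p4 -> False.
Proof.
move=> *; apply: (noP4 (p1 := p1) (p2 := p2) (p3 := p3) (p4 := p4)).
by split; [apply/and4P; split | | apply/and3P; split].
Qed.

Lemma nbr_of_hub_nbr a z : e u a -> e c a -> e u z -> e a z -> z = c.
Proof.
move=> ua ca uz az; apply/eqP; apply: contraT => zc; exfalso.
have [b [ub cb] ba] : exists2 b, e u b /\ e c b & b != a.
  have [a1 [a2 []]] := card_gt1P c_hub; rewrite !in_nbhdN => /andP [? ?] /andP [? ?] a12.
  by case: (eqVneq a1 a) => [<-|a1a]; [exists a2; last rewrite eq_sym | exists a1].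
case: (boolP (e c z)) => cz; last by apply: (@no_path4 z a c b); nbhd_done.
have [y] := exists_notin3 a c z A4; rewrite in_A_plus !inE !negb_or.
case/andP => uy /card_gt0P [y']; rewrite in_nbhdN => /andP [uy' yy'] /and3P [ya yc yz].
case: (eqVneq y' a) => [?|y'a]; first by subst y'; apply: (@no_path4 y a c z); nbhd_done.
case: (eqVneq y' c) => [?|y'c]; first by subst y'; apply: (@no_path4 y c a z); nbhd_done.
case: (eqVneq y' z) => [?|y'z]; first by subst y'; apply: (@no_path4 y z c a); nbhd_done.
by apply: (@H43_free_no_P3_K2 a c z y y'); nbhd_done.
Qed.

Lemma edgeN_through_hub p q : e u p -> e u q -> e p q -> (p == c) || (q == c).
Proof.
move=> up uq pq; case: (eqVneq p c) => // pc; case: (eqVneq q c) => // qc /=.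
case: (boolP (e c p)) => cp; first by move: qc; rewrite (nbr_of_hub_nbr up cp uq pq) eqxx.
case: (boolP (e c q)) => cq.
  by move: pc; rewrite (nbr_of_hub_nbr uq cq up) ?eqxx // esym.
have [a1 [a2 []]] := card_gt1P c_hub; rewrite !in_nbhdN => /andP [ua1 ca1] /andP [ua2 ca2] a12.
by exfalso; apply: (@H43_free_no_P3_K2 a1 c a2 p q); nbhd_done.
Qed.

Lemma A_plus_hub : A_plus e u = c |: [set w in nbhd e u | e c w].
Proof.
apply/setP => v; rewrite in_setU1 in_nbhdN in_A_plus.
case: (eqVneq v c) => [->|vc] /=; first by rewrite uc ltnW.
apply/andP/andP => [[uv /card_gt0P [v']]|[uv cv]].
  rewrite in_nbhdN => /andP [uv' vv']; split => //.
  by move: (edgeN_through_hub uv uv' vv'); rewrite (negbTE vc) => /eqP <-; rewrite esym.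
by split => //; apply/card_gt0P; exists c; rewrite in_nbhdN uc esym.
Qed.

Lemma A_plus_star : induced_iso e (A_plus e u) (@star_rel (degN e u c)).
Proof.
rewrite A_plus_hub; apply: induced_iso_star => // [v|v w]; rewrite !in_nbhdN.
  by case/andP.
move=> /andP [uv cv] /andP [uw cw]; apply/negP => vw.
have /orP [] := edgeN_through_hub uv uw vw => /eqP E; subst; by rewrite eirr in cv cw.
Qed.

End NoPath4.

End NbhdStructure.

Local Open Scope ring_scope.

Lemma spectral_radius_unique (R : realType) n (e : rel 'I_n) (r1 r2 : R) :
  spectral_radius e r1 -> spectral_radius e r2 -> r1 = r2.
Proof. by move=> [e1 le1] [e2 le2]; apply/eqP; rewrite eq_le le1 ?le2. Qed.

Lemma eigenvector_entry (R : realType) n (A : 'M[R]_n) (x : 'cV[R]_n) (r : R) :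
  A *m x = r *: x -> forall i, r * x i 0 = \sum_j A i j * x j 0.
Proof.
by move=> Ax i; have := congr1 (fun M : 'cV[R]_n => M i 0) Ax; rewrite !mxE => <-.
Qed.

(* The book graph K_2 v tK_1 plus a disjoint edge, with m = 2t + 2, is admissible. *)
Lemma extremal_radius_ge (R : realType) (m : nat) (r : R) :
  (2 <= m)%N -> ~~ odd m ->
  (forall n' (e' : rel 'I_n') (r' : R), admissible m e' -> spectral_radius e' r' -> r' <= r) ->
  m%:R - 2 <= r ^+ 2 - r.
Proof.
move=> m2 mev rmax; set t := (m./2 - 1)%N.
have mt : m = (2 * t + 2)%N.
  by have := odd_double_half m; rewrite (negbTE mev) add0n -mul2n /t; lia.
have adm : admissible m (book_edge t).
  split; [exact: (conj (@book_edge_sym t) (@book_edge_irr t)) | exact: book_edge_H43_free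
         | by rewrite book_edge_num_edges mt | exact: book_edge_no_isolated].
have rt := rmax _ _ _ adm (book_edge_spectral_radius R t).
have := book_radius_eq R t; have := book_radius_ge1 R t.
have -> : m%:R - 2 = 2%:R * t%:R :> R by rewrite mt natrD natrM; ring.
nra.
Qed.

Unset Implicit Arguments.

Theorem mainTheorem7 (R : realType) (m n : nat) (e : rel 'I_n)
    (x : 'cV[R]_n) (u : 'I_n) :
  (38 <= m)%N -> ~~ odd m ->
  extremal R m e ->
  perron_vector e x ->
  (forall v : 'I_n, x v 0 <= x u 0) ->
  exists t : nat, (1 <= t)%N /\ induced_iso e (A_plus e u) (@star_rel t).
Proof.
move=> m38 mev [[[esym eirr] hfree hedges _] [r' [hr' rmax]]] [r [hr Ax xpos _]] xmax.
have rr := spectral_radius_unique hr' hr; subst r'.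
have rm := extremal_radius_ge (@leq_trans 38 2 m isT m38) mev rmax.
have eig i : r * x i 0 = \sum_j (e i j)%:R * x j 0.
  by rewrite (eigenvector_entry Ax); under eq_bigr do rewrite mxE.
have sum10 := sumN_degN_ge10 esym eirr hedges xpos xmax eig m38 rm.
have /existsP [c /andP [uc c_hub]] := exists_nbr_degN_gt1 esym eirr hedges xpos xmax eig m38 rm.
case: (boolp.pselect (exists p1 p2 p3 p4, nbhd_path4 e u p1 p2 p3 p4)).
  case=> p1 [p2 [p3 [p4 P]]]; exfalso.
  exact: not_nbhd_sparse esym eirr hedges xpos xmax eig m38 rm (nbhd_sparse_of_path4 esym eirr hfree P).
move=> noP4; exists (degN e u c); split; first exact: ltnW.
have {}noP4 p1 p2 p3 p4 : ~ nbhd_path4 e u p1 p2 p3 p4.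
  by move=> P; apply: noP4; exists p1, p2, p3, p4.
exact: (A_plus_star esym eirr hfree noP4 uc c_hub (card_A_plus_ge4 esym eirr sum10)).
Qed.
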